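(* Let $\mathcal Z=(Z_n)_{n\ge0}$ be an irreducible Markov chain on a finite state space $F$ with transition matrix $R$, and let $N\ge1$. There is a constant $\rho_N$, depending only on $R$ and $N$, such that the following holds for every initial distribution of $\mathcal Z$, all integers $0=k_1<k_2<\dots<k_N<\infty$ (with $k_{N+1}=\infty$), and every measurable $\Lambda:F^{\mathbb N_0}\to[0,\infty)$: if $(Z^i_n)_{k_i\le n\le k_{i+1}}$, $i=1,\dots,N$, are $N$ independent stationary Markov chains with transition matrix $R$, and $\tilde{\mathcal Z}=(\tilde Z_n)_{n\ge0}$ is defined by $\tilde Z_n=Z^i_n$ for $k_i\le n<k_{i+1}$, then $$\mathbb E(\Lambda(\mathcal Z))\le\rho_N\,\mathbb E(\Lambda(\tilde{\mathcal Z})).$$ *)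

From HB Require Import structures.
From mathcomp Require Import all_boot all_order all_algebra.
From mathcomp Require Import all_classical all_reals all_analysis.
Set Implicit Arguments. Unset Strict Implicit. Unset Printing Implicit Defensive.
Import Order.TTheory GRing.Theory Num.Theory.
Local Open Scope classical_set_scope.
Local Open Scope ring_scope.

Section MarkovDefs.
Variables (R : realType) (F : finType).

Definition stochastic (Q : F -> F -> R) : Prop :=
  (forall x y, 0 <= Q x y) /\ (forall x, \sum_(y : F) Q x y = 1).

Fixpoint tpow (Q : F -> F -> R) (n : nat) (x y : F) : R :=
  match n with
  | 0 => (x == y)%:R
  | n'.+1 => \sum_(z : F) tpow Q n' x z * Q z y
  end.

Definition irreducible (Q : F -> F -> R) : Prop :=
  forall x y, exists n, 0 < tpow Q n x y.

Definition prob_distr (nu : F -> R) : Prop :=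
  (forall x, 0 <= nu x) /\ \sum_(x : F) nu x = 1.

Definition stationary_distr (Q : F -> F -> R) (nu : F -> R) : Prop :=
  prob_distr nu /\ forall y, \sum_(x : F) nu x * Q x y = nu y.

(* time window [s, u] (u = None means [s, oo)) *)
Definition in_window (s : nat) (u : option nat) (n : nat) : bool :=
  (s <= n)%N && (if u is Some t then (n <= t)%N else true).

(* X (observed at times n in the window [s,u]) is a Markov chain with
   initial prob_distr nu (at time s) and transition matrix Q, on the
   probability space (Omega, P): the events {X n = x} are measurable and
   the finite-dimensional distributions are the Markov ones. *)
Definition markov_on d (Omega : measurableType d) (P : probability Omega R)
  (X : nat -> Omega -> F) (s : nat) (u : option nat)
  (nu : F -> R) (Q : F -> F -> R) : Prop :=
  (forall n x, in_window s u n -> measurable [set w | X n w = x]) /\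
  (forall (m : nat) (xs : nat -> F), in_window s u (s + m) ->
     P [set w | forall j, (j <= m)%N -> X (s + j) w = xs j] =
     (nu (xs 0%N) * \prod_(j < m) Q (xs j) (xs j.+1))%:E).

(* blocks: chain i (0 <= i < N) lives on [k i, k (i+1)], the last one on [k (N-1), oo) *)
Definition block_end (k : nat -> nat) (N i : nat) : option nat :=
  if (i.+1 < N)%N then Some (k i.+1) else None.

Definition proc_sigma d (Omega : measurableType d) (X : nat -> Omega -> F)
  (s : nat) (u : option nat) : set (set Omega) :=
  <<s [set A | exists n x, in_window s u n /\ A = [set w | X n w = x]] >>.

Definition indep_procs d (Omega : measurableType d) (P : probability Omega R)
  (N : nat) (k : nat -> nat) (Zs : nat -> nat -> Omega -> F) : Prop :=
  forall A : nat -> set Omega,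
    (forall i, (i < N)%N -> proc_sigma (Zs i) (k i) (block_end k N i) (A i)) ->
    P [set w | forall i, (i < N)%N -> A i w] = \big[*%E/1%E]_(i < N) P (A i).

Definition blk (k : nat -> nat) (N n : nat) : nat := \max_(i < N | (k i <= n)%N) i.

Definition glued d (Omega : measurableType d) (k : nat -> nat) (N : nat)
  (Zs : nat -> nat -> Omega -> F) : nat -> Omega -> F :=
  fun n w => Zs (blk k N n) n w.

Definition cyl_sigma : set (set (nat -> F)) :=
  <<s [set A | exists n x, A = [set f : nat -> F | f n = x]] >>.

Definition path_measurable (L : (nat -> F) -> R) : Prop :=
  forall B : set R, measurable B -> cyl_sigma (L @^-1` B).

End MarkovDefs.

From HB Require Import structures.
From mathcomp Require Import all_boot all_order all_algebra.
From mathcomp Require Import all_classical all_reals all_analysis.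
From mathcomp Require Import measurable_realfun zify.
Import Order.TTheory GRing.Theory Num.Theory.
Local Open Scope classical_set_scope.
Local Open Scope ring_scope.
Set Implicit Arguments.
Unset Strict Implicit.

(* Irreducibility gives a delta > 0 below every entry of every stationary
   distribution.  A cylinder {Z_0 = z_0, ..., Z_m = z_m} has probability
   mu(z_0) prod_n Q(z_n, z_{n+1}) <= prod_n Q(z_n, z_{n+1}) for Z.  For the glued
   process, independence factorises the cylinder over the blocks; each factor is
   at least delta times the transitions inside its block, and dropping the
   transitions across block boundaries (all <= 1) leaves at least
   delta^N prod_n Q(z_n, z_{n+1}).  So P(Z in C) <= delta^-N P(glued in C) on
   cylinders, hence on all measurable sets of paths by a monotone class
   argument, and integrating gives the claim with rho = delta^-N. *)

Section NonnegMass.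
Variables (R : realType) (T : finType).

Lemma le1_of_sum1 (f : T -> R) x :
  (forall y, 0 <= f y) -> \sum_y f y = 1 -> f x <= 1.
Proof.
move=> f0 <-; rewrite (bigD1 x) //= lerDl.
by apply: sumr_ge0 => y _.
Qed.

Lemma finite_pos_lb (f : T -> R) :
  (forall t, 0 < f t) -> exists2 c, 0 < c & forall t, c <= f t.
Proof.
move=> f_gt0; have [t0 _ | T0] := pickP (@predT T); last first.
  by exists 1 => // t; have := T0 t.
case: (Order.TotalTheory.arg_minP f (P := xpredT) (i0 := t0) isT) => t _ min_t.
by exists (f t) => // t'; exact: min_t.
Qed.

Lemma prod_le_disjoint_prods (I : finType) (P : I -> T -> bool) (q : T -> R) :
  (forall t, 0 <= q t <= 1) -> (forall i j t, P i t -> P j t -> i = j) ->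
  \prod_t q t <= \prod_i \prod_(t | P i t) q t.
Proof.
move=> q01 P_uniq; rewrite (exchange_big_dep xpredT) //=.
apply: ler_prod => t _; have /andP[q0 q1] := q01 t; rewrite q0 /=.
have [i Pit | noP] := pickP (P^~ t).
  rewrite (bigD1 i) //= big1 ?mulr1 // => j /andP[Pjt ji].
  by move: ji; rewrite (P_uniq _ _ _ Pjt Pit) eqxx.
by rewrite big_pred0.
Qed.
End NonnegMass.

Section Stationary.
Variables (R : realType) (F : finType) (Q : F -> F -> R).

Lemma tpow_ge0 : stochastic Q -> forall n x y, 0 <= tpow Q n x y.
Proof.
move=> [Q0 _]; elim=> [|n IH] x y /=; first by rewrite ler0n.
by apply: sumr_ge0 => z _; apply: mulr_ge0.
Qed.

Lemma stationary_tpow nu : stationary_distr Q nu -> forall n y,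
  \sum_x nu x * tpow Q n x y = nu y.
Proof.
move=> [_ nuQ]; elim=> [|n IH] y /=.
  rewrite (bigD1 y) //= eqxx mulr1 big1 ?addr0 // => x /negbTE ->.
  by rewrite mulr0.
under eq_bigr do rewrite big_distrr /=.
rewrite exchange_big /= -[RHS]nuQ; apply: eq_bigr => z _.
by rewrite -(IH z) big_distrl; apply: eq_bigr => x _; rewrite mulrA.
Qed.

(* Summing [nu x * c <= nu y] over x gives [c <= #|F| * nu y]; the [.+1] only avoids
   dividing by zero when F is empty. *)
Lemma stationary_distr_lb : stochastic Q -> irreducible Q ->
  exists2 delta : R, 0 < delta &
    forall nu, stationary_distr Q nu -> forall y, delta <= nu y.
Proof.
move=> sto irr.
have /choice [n n_pos] : forall p : F * F, exists n, 0 < tpow Q n p.1 p.2.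
  by move=> [x y]; exact: irr.
have [c c_gt0 c_le] := finite_pos_lb n_pos.
have card_gt0 : (0 : R) < #|F|.+1%:R by rewrite ltr0n.
exists (c / #|F|.+1%:R) => [|nu nu_st y]; first by rewrite divr_gt0.
have [[nu0 nu1] _] := nu_st.
have mass_y x : nu x * c <= nu y.
  rewrite -(stationary_tpow nu_st (n (x, y)) y) (bigD1 x) //=.
  apply: le_trans (_ : nu x * tpow Q (n (x, y)) x y <= _).
    by rewrite ler_wpM2l //; exact: (c_le (x, y)).
  rewrite lerDl; apply: sumr_ge0 => z _; apply: mulr_ge0 => //.
  exact: tpow_ge0.
rewrite ler_pdivrMr // mulrC; apply: le_trans (_ : #|F|%:R * nu y <= _).
  have -> : #|F|%:R * nu y = \sum_(x : F) nu y by rewrite sumr_const mulr_natl.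
  rewrite -[c]mul1r -nu1 big_distrl.
  by apply: ler_sum => x _; exact: mass_y.
by apply: ler_wpM2r => //; rewrite ler_nat.
Qed.
End Stationary.

Lemma g_sigma_setT (T : Type) (G : set (set T)) : <<s G>> setT.
Proof.
by case: (@smallest_sigma_algebra T setT G) => G0 GC _; have := GC _ G0; rewrite setD0.
Qed.

Lemma g_sigma_bounded_forall (T : Type) (G : set (set T)) (P : nat -> T -> Prop) m :
  (forall j, (j <= m)%N -> <<s G>> [set w | P j w]) ->
  <<s G>> [set w | forall j, (j <= m)%N -> P j w].
Proof.
move=> GP; case: (@smallest_sigma_algebra T setT G) => _ GC GU.
have -> : [set w | forall j, (j <= m)%N -> P j w] =
    setT `\` \bigcup_j (if (j <= m)%N then setT `\` [set w | P j w] else set0).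
  apply/seteqP; split => w /=.
    by move=> Pw; split => // -[j _]; case: ifP => // jm [_]; apply; exact: Pw.
  move=> [_ nPw] j jm; apply: contrapT => nPjw; apply: nPw.
  by exists j => //; rewrite jm.
apply: (GC); apply: (GU) => j; case: ifP => jm; last exact: sigma_algebra0.
by apply: GC; exact: GP.
Qed.

Lemma lee_prod_EFin (R : realType) (I : finType) (a : I -> R) (b : I -> \bar R) :
  (forall i, 0 <= a i) -> (forall i, (a i)%:E <= b i)%E ->
  ((\prod_i a i)%:E <= \prod_i b i)%E.
Proof.
move=> a0 ab; rewrite -prodEFin.
suff [] : (0 <= \prod_i (a i)%:E /\ \prod_i (a i)%:E <= \prod_i b i)%E by [].
apply: (big_ind2 (fun x y => 0 <= x /\ x <= y)%E) => [|x1 y1 x2 y2 [x0 xy] [y0 yy]|i _].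
- by rewrite lee01 lexx.
- by split; [rewrite mule_ge0 | rewrite lee_pmul].
- by rewrite lee_fin a0 ab.
Qed.

Section Blocks.
Variables (k : nat -> nat) (N : nat).
Hypotheses (N_gt0 : (0 < N)%N) (k0 : k 0%N = 0%N)
  (k_incr : forall i, (i.+1 < N)%N -> (k i < k i.+1)%N).

Lemma k_mono i j : (i <= j)%N -> (j < N)%N -> (k i <= k j)%N.
Proof.
elim: j => [|j IH]; first by rewrite leqn0 => /eqP ->.
rewrite leq_eqVlt => /orP[/eqP -> //|ij] jN.
by have := IH ij (ltnW jN); have := k_incr jN; lia.
Qed.

(* Block i is [k i, k (i+1)) (unbounded for the last one): the times at which the glued
   process reads [Zs i], whereas [Zs i] is a chain on the closed window [k i, k (i+1)]. *)
Definition in_block i n :=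
  [&& (i < N)%N, (k i <= n)%N & (i.+1 < N)%N ==> (n < k i.+1)%N].

Lemma in_block_uniq i j n : in_block i n -> in_block j n -> i = j.
Proof.
wlog ij : i j / (i <= j)%N => [wlog_ij|].
  by case: (leqP i j) => [|/ltnW] ij Hi Hj; [|apply/esym]; apply: wlog_ij.
rewrite leq_eqVlt in ij; case/orP: ij => [/eqP // | ij].
move=> /and3P[_ kin /implyP ni] /and3P[jN kjn _].
by have := k_mono ij jN; have := ni (leq_ltn_trans ij jN); lia.
Qed.

Lemma in_block_blk n : in_block (blk k N n) n.
Proof.
have nonempty : (0 < #|[pred i : 'I_N | k i <= n]|)%N.
  by apply/card_gt0P; exists (Ordinal N_gt0); rewrite inE /= k0.
have [i kin blk_i] := eq_bigmax_cond (fun i : 'I_N => nat_of_ord i) nonempty.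
rewrite /in_block /blk blk_i ltn_ord /=; rewrite inE in kin; rewrite kin /=.
apply/implyP => iN; rewrite ltnNge; apply/negP => kin1.
have := @leq_bigmax_cond _ (fun j : 'I_N => k j <= n)%N (fun j => nat_of_ord j)
  (Ordinal iN) kin1.
by rewrite /= blk_i ltnn.
Qed.

Lemma blk_in_block i n : in_block i n -> blk k N n = i.
Proof. exact/in_block_uniq/in_block_blk. Qed.

Lemma blk_eq i n : (blk k N n == i) = in_block i n.
Proof. by apply/eqP/idP => [<- | /blk_in_block]; first exact: in_block_blk. Qed.

Lemma in_block_window i n :
  in_block i n -> in_window (k i) (block_end k N i) n.
Proof.
rewrite /in_window /block_end => /and3P[_ -> /implyP]; case: ifP => // _ H.
exact/ltnW/H.
Qed.

Definition block_last i m := if (i.+1 < N)%N then minn m (k i.+1).-1 else m.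

Definition block_step i n := (blk k N n == i) && (blk k N n.+1 == i).

Lemma in_block_le_last i m n : (i < N)%N ->
  ((n <= m) && in_block i n)%N = (k i <= n <= block_last i m)%N.
Proof.
rewrite /in_block /block_last => iN; rewrite iN /=.
case iN1: (i.+1 < N)%N => /=; last by apply/idP/idP; lia.
by have := k_incr iN1; move=> ?; apply/idP/idP; lia.
Qed.

Lemma block_step_lt_last i m n : (i < N)%N ->
  ((n < m) && block_step i n)%N = (k i <= n < block_last i m)%N.
Proof.
rewrite /block_step !blk_eq /in_block /block_last => iN; rewrite iN /=.
case iN1: (i.+1 < N)%N => /=; last by apply/idP/idP; lia.
by have := k_incr iN1; move=> ?; apply/idP/idP; lia.
Qed.

Lemma block_last_window i m : (i < N)%N -> (k i <= m)%N ->
  in_window (k i) (block_end k N i) (block_last i m) /\ (k i <= block_last i m <= m)%N.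
Proof.
rewrite /in_window /block_end /block_last => iN kim.
by case iN1: (i.+1 < N)%N; [have := k_incr iN1 | ]; move=> *; split; lia.
Qed.

Lemma prod_block_step (S : pzSemiRingType) (q : nat -> S) i m :
  (i < N)%N -> (k i <= m)%N ->
  \prod_(n < m | block_step i n) q n = \prod_(j < block_last i m - k i) q (k i + j)%N.
Proof.
move=> iN kim; have [_ /andP[ki_last last_m]] := block_last_window iN kim.
transitivity (\prod_(k i <= n < block_last i m) q n).
  rewrite big_geq_mkord (big_ord_widen_cond _ _ _ last_m).
  by apply: eq_bigl => n; have := block_step_lt_last m n iN; rewrite ltn_ord.
rewrite -{1}[k i]add0n big_addn big_mkord.
by apply: eq_bigr => j _; rewrite addnC.
Qed.

Section GluedCylinder.
Variables (R : realType) (F : finType) (Q : F -> F -> R) (delta : R).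
Hypotheses (Q_stochastic : stochastic Q) (delta_gt0 : 0 < delta)
  (stationary_ge_delta : forall nu, stationary_distr Q nu -> forall y, delta <= nu y).
Variables (d : measure_display) (Omega : measurableType d) (P : probability Omega R)
  (Zs : nat -> nat -> Omega -> F).
Hypotheses (Zs_markov : forall i, (i < N)%N -> exists nu, stationary_distr Q nu /\
    markov_on P (Zs i) (k i) (block_end k N i) nu Q)
  (Zs_indep : indep_procs P N k Zs).
Variables (z : nat -> F) (m : nat).

Definition block_cylinder i :=
  [set w | forall n, (n <= m)%N -> in_block i n -> Zs i n w = z n].

Lemma glued_cylinderE :
  [set w | forall n, (n <= m)%N -> glued k N Zs n w = z n] =
  [set w | forall i, (i < N)%N -> block_cylinder i w].
Proof.
apply/seteqP; split => w /= cyl_w.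
  by move=> i iN n nm /blk_in_block blk_n; rewrite -cyl_w // /glued blk_n.
move=> n nm; have /and3P[blkN _ _] := in_block_blk n.
exact: cyl_w blkN n nm (in_block_blk n).
Qed.

Lemma block_cylinder_proc_sigma i : (i < N)%N ->
  proc_sigma (Zs i) (k i) (block_end k N i) (block_cylinder i).
Proof.
move=> iN; apply: g_sigma_bounded_forall => n _ /=.
have [/in_block_window win | _] := boolP (in_block i n).
  apply: sub_sigma_algebra; exists n, (z n); split => //.
  by apply/seteqP; split => w /=; [apply | move=> ->].
have -> : [set w | false -> Zs i n w = z n] = setT by apply/seteqP; split.
exact: g_sigma_setT.
Qed.

Lemma block_cylinder_lb i : (i < N)%N ->
  ((delta * \prod_(n < m | block_step i n) Q (z n) (z n.+1))%:E <=
    P (block_cylinder i))%E.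
Proof.
move=> iN; have [nu [nu_st [_ nu_cyl]]] := Zs_markov iN.
have [Q0 _] := Q_stochastic.
case: (leqP (k i) m) => [kim | mki].
  have [win /andP[ki_last _]] := block_last_window iN kim.
  have -> : block_cylinder i = [set w | forall j, (j <= block_last i m - k i)%N ->
      Zs i (k i + j)%N w = z (k i + j)%N].
    apply/seteqP; split => w /= cyl_w j.
      move=> jL; have /andP[ijm ij_in] : ((k i + j <= m) && in_block i (k i + j))%N.
        by rewrite in_block_le_last // leq_addr /=; lia.
      exact: cyl_w ijm ij_in.
    move=> jm /(conj jm) /andP; rewrite in_block_le_last // => /andP[kij jl].
    by rewrite -(subnKC kij) cyl_w //; lia.
  rewrite nu_cyl ?subnKC // (prod_block_step (fun n => Q (z n) (z n.+1)) iN kim).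
  under eq_bigr do rewrite -addnS.
  rewrite addn0 lee_fin.
  by rewrite ler_wpM2r ?stationary_ge_delta //; apply: prodr_ge0.
have -> : block_cylinder i = setT.
  by apply/seteqP; split => // w _ n nm /and3P[_ kin _]; lia.
rewrite probability_setT big_pred0 ?mulr1; last first.
  move=> n; apply/negP => /andP[+ _]; rewrite blk_eq => /and3P[_ kin _].
  by have := ltn_ord n; lia.
have [[nu0 nu1] _] := nu_st.
by rewrite lee_fin (le_trans (stationary_ge_delta nu_st (z 0%N))) ?le1_of_sum1.
Qed.

Lemma glued_cylinder_lb :
  ((delta ^+ N * \prod_(n < m) Q (z n) (z n.+1))%:E <=
    P [set w | forall n, (n <= m)%N -> glued k N Zs n w = z n])%E.
Proof.
have [Q0 Q1] := Q_stochastic.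
have Q01 x y : 0 <= Q x y <= 1 by rewrite Q0 le1_of_sum1.
rewrite glued_cylinderE (Zs_indep block_cylinder_proc_sigma).
apply: le_trans (lee_prod_EFin _ (fun i : 'I_N => block_cylinder_lb (ltn_ord i)));
  last first.
  by move=> i; rewrite mulr_ge0 ?(ltW delta_gt0) //; apply: prodr_ge0.
rewrite lee_fin big_split prodr_const card_ord /=.
rewrite ler_wpM2l ?exprn_ge0 ?(ltW delta_gt0) //.
apply: prod_le_disjoint_prods => [n | i j n /andP[/eqP ni _] /andP[/eqP nj _]].
  exact: Q01.
by apply: val_inj; rewrite /= -ni nj.
Qed.

End GluedCylinder.
End Blocks.

Section MonotoneClass.
Variables (R : realType) (d : measure_display) (T : measurableType d).

Lemma le_measure_setring (C : set (set T)) (mu nu : {measure set T -> \bar R}) :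
  setring C -> C setT -> C `<=` measurable -> measurable `<=` <<s C>> ->
  (forall A, measurable A -> mu A < +oo)%E -> (forall A, measurable A -> nu A < +oo)%E ->
  (forall A, C A -> mu A <= nu A)%E -> forall A, measurable A -> (mu A <= nu A)%E.
Proof.
move=> C_ring CT C_meas meas_C mu_fin nu_fin le_C.
pose D := [set A | measurable A /\ (mu A <= nu A)%E].
have le_cvg (G : (set T)^nat) a b : mu \o G @ \oo --> a -> nu \o G @ \oo --> b ->
    (forall n, D (G n)) -> (a <= b)%E.
  move=> mu_a nu_b DG; rewrite -(cvg_lim _ mu_a) // -(cvg_lim _ nu_b) //.
  apply: lee_lim; [exact: cvgP mu_a | exact: cvgP nu_b |].
  by apply: nearW => n; exact: (DG n).2.
have D_monotone : monotone D.
  split=> G monoG DG; have mG n : measurable (G n) := (DG n).1.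
    have mU : measurable (\bigcup_n G n) by exact: bigcupT_measurable.
    by split=> //; apply: (le_cvg G _ _ _ _ DG); exact: nondecreasing_cvg_mu.
  have mI : measurable (\bigcap_n G n) by exact: bigcapT_measurable.
  split=> //; apply: (le_cvg G _ _ _ _ DG); apply: nonincreasing_cvg_mu => //.
  - exact: mu_fin.
  - exact: nu_fin.
have sigma_ring_D : <<sr C>> `<=` D.
  apply: monotone_setring_sub_g_sigma_ring D_monotone C_ring _.
  by move=> A CA; split; [exact: C_meas | exact: le_C].
suff sigma_C : <<s C>> `<=` <<sr C>> by move=> A /meas_C /sigma_C /sigma_ring_D [].
apply: smallest_sub; last exact: sub_g_sigma_ring.
have [s0 sD sU] := smallest_sigma_ring C; split=> // A sA.
by apply: sD => //; exact: sub_g_sigma_ring.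
Qed.

End MonotoneClass.

(* [g_sigma_algebraType] needs a pointed carrier, and [nat -> F] has no canonical
   point for a bare finType [F]: the path [f0] provides one. *)
Definition paths_from {F : Type} (f0 : nat -> F) := nat -> F.
HB.instance Definition _ (F : Type) (f0 : nat -> F) := gen_eqMixin (paths_from f0).
HB.instance Definition _ (F : Type) (f0 : nat -> F) := gen_choiceMixin (paths_from f0).
HB.instance Definition _ (F : Type) (f0 : nat -> F) := isPointed.Build (paths_from f0) f0.

Section PathSpace.
Variables (R : realType) (F : finType) (f0 : nat -> F).

Definition coord_sets : set (set (paths_from f0)) :=
  [set A | exists n x, A = [set f | f n = x]].
Local Notation paths := (g_sigma_algebraType coord_sets).

Lemma path_measurable_EFin (L : (nat -> F) -> R) : path_measurable L ->
  measurable_fun [set: paths] ((fun f => (L f)%:E) : paths -> \bar R).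
Proof.
move=> mL; apply/(measurable_EFinP _ (L : paths -> R)) => _ B mB.
by rewrite setTI; exact: mL.
Qed.

Lemma measurable_sample_path d (Omega : measurableType d) (X : nat -> Omega -> F) :
  (forall n x, measurable [set w | X n w = x]) ->
  measurable_fun [set: Omega] ((fun w n => X n w) : Omega -> paths).
Proof.
move=> mX; apply: (@measurability _ _ _ paths _ _ coord_sets) => //.
by move=> _ [B [n [x ->]] <-]; rewrite setTI; exact: mX.
Qed.

Definition prefix m (f : nat -> F) : {ffun 'I_m.+1 -> F} := [ffun j : 'I_m.+1 => f j].

Lemma prefixP m p (f : nat -> F) :
  prefix m f = p <-> forall j, (j <= m)%N -> f j = p (inord j).
Proof.
split=> [<- j jm | fp]; first by rewrite ffunE inordK.
by apply/ffunP => j; rewrite ffunE fp ?inord_val // -ltnS.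
Qed.

Lemma measurable_prefix_eq m p : measurable ([set f | prefix m f = p] : set paths).
Proof.
have -> : [set f | prefix m f = p] = [set f | forall j, (j <= m)%N -> f j = p (inord j)].
  by apply/seteqP; split=> f /= /prefixP.
by apply: g_sigma_bounded_forall => j _; apply: sub_sigma_algebra; exists j, (p (inord j)).
Qed.

Lemma prefix_in_cons m p s :
  [set f : paths | prefix m f \in p :: s] =
  [set f | prefix m f = p] `|` [set f | prefix m f \in s].
Proof.
apply/seteqP; split=> f /=; rewrite inE; first by case/orP => [/eqP|]; [left | right].
by case=> [-> | ->]; rewrite ?eqxx ?orbT.
Qed.

Lemma measurable_prefix_in m (s : seq {ffun 'I_m.+1 -> F}) :
  measurable ([set f | prefix m f \in s] : set paths).
Proof.
elim: s => [|p s IH].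
  by have -> : [set f | prefix m f \in [::]] = set0 by apply/seteqP; split.
by rewrite prefix_in_cons; apply: measurableU IH; exact: measurable_prefix_eq.
Qed.

Lemma measure_prefix_in (mu : {measure set paths -> \bar R}) m (s : seq {ffun 'I_m.+1 -> F}) :
  uniq s -> mu [set f | prefix m f \in s] = (\sum_(p <- s) mu [set f | prefix m f = p])%E.
Proof.
elim: s => [_ | p s IH /andP[ps us]].
  by rewrite big_nil; have -> : [set f | prefix m f \in [::]] = set0 by apply/seteqP; split.
rewrite prefix_in_cons measureU.
- by rewrite big_cons; congr (_ + _)%E; exact: IH.
- exact: measurable_prefix_eq.
- exact: measurable_prefix_in.
- by apply/seteqP; split=> // f /= [-> ps']; move: ps; rewrite ps'.
Qed.

Definition finite_dimensional (A : set paths) :=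
  exists m, forall f g : paths, (forall j, (j <= m)%N -> f j = g j) -> A f -> A g.

Lemma finite_dimensional_setring : setring finite_dimensional.
Proof.
split; first by exists 0%N.
- move=> A B [m1 A1] [m2 B2]; exists (maxn m1 m2) => f g fg [Af | Bf].
    by left; apply: (A1 f) => // j jm; apply: fg; rewrite leq_max jm.
  by right; apply: (B2 f) => // j jm; apply: fg; rewrite leq_max jm orbT.
- move=> A B [m1 A1] [m2 B2]; exists (maxn m1 m2) => f g fg [Af nBf]; split.
    by apply: (A1 f) => // j jm; apply: fg; rewrite leq_max jm.
  move=> Bg; apply: nBf; apply: (B2 g) => // j jm; apply/esym/fg.
  by rewrite leq_max jm orbT.
Qed.

Lemma finite_dimensional_prefix_in A : finite_dimensional A ->
  exists m (s : seq {ffun 'I_m.+1 -> F}), uniq s /\ A = [set f | prefix m f \in s].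
Proof.
move=> [m A_m]; exists m.
exists [seq p <- index_enum {ffun 'I_m.+1 -> F} | `[< exists f, A f /\ prefix m f = p >]].
split; first by rewrite filter_uniq // index_enum_uniq.
apply/seteqP; split=> f /=.
  by move=> Af; rewrite mem_filter mem_index_enum andbT; apply/asboolP; exists f.
rewrite mem_filter => /andP[/asboolP [g [Ag /prefixP gp]] _].
by apply: (A_m g) => // j jm; rewrite gp // ffunE inordK.
Qed.

Lemma le_path_measure (mu nu : {measure set paths -> \bar R}) :
  (forall A, measurable A -> mu A < +oo)%E -> (forall A, measurable A -> nu A < +oo)%E ->
  (forall m p, mu [set f | prefix m f = p] <= nu [set f | prefix m f = p])%E ->
  forall A, measurable A -> (mu A <= nu A)%E.
Proof.
move=> mu_fin nu_fin le_prefix.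
apply: le_measure_setring finite_dimensional_setring _ _ _ mu_fin nu_fin _.
- by exists 0%N.
- by move=> A /finite_dimensional_prefix_in [m [s [_ ->]]]; exact: measurable_prefix_in.
- apply: sub_sigma_algebra2 => _ [n [x ->]].
  by exists n => f g fg /= <-; apply/esym/fg.
move=> A /finite_dimensional_prefix_in [m [s [us ->]]].
by rewrite !measure_prefix_in //; apply: lee_sum => p _.
Qed.

End PathSpace.

Section SamplePathComparison.
Variables (R : realType) (F : finType).
Variables (d1 d2 : measure_display) (Omega1 : measurableType d1) (Omega2 : measurableType d2)
  (P1 : probability Omega1 R) (P2 : probability Omega2 R)
  (X1 : nat -> Omega1 -> F) (X2 : nat -> Omega2 -> F) (rho : R).
Hypotheses (rho_ge0 : 0 <= rho)
  (X1_meas : forall n x, measurable [set w | X1 n w = x])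
  (X2_meas : forall n x, measurable [set w | X2 n w = x])
  (le_cylinder : forall m (z : nat -> F),
    (P1 [set w | forall j, (j <= m)%N -> X1 j w = z j] <=
     rho%:E * P2 [set w | forall j, (j <= m)%N -> X2 j w = z j])%E).

Lemma le_integral_sample_paths (L : (nat -> F) -> R) :
  path_measurable L -> (forall f, 0 <= L f) ->
  (\int[P1]_w (L (fun n => X1 n w))%:E <= rho%:E * \int[P2]_w (L (fun n => X2 n w))%:E)%E.
Proof.
move=> mL L_ge0; pose f0 n := X1 n point.
pose paths := g_sigma_algebraType (coord_sets (f0 := f0)).
pose path1 : Omega1 -> paths := fun w n => X1 n w.
pose path2 : Omega2 -> paths := fun w n => X2 n w.
have mpath1 : measurable_fun setT path1 := measurable_sample_path X1_meas.
have mpath2 : measurable_fun setT path2 := measurable_sample_path X2_meas.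
have mLE := @path_measurable_EFin _ _ f0 _ mL.
have LE_ge0 : {in setT, forall f : paths, 0 <= (L f)%:E}%E by move=> f _; rewrite lee_fin.
have := ge0_integral_pushforward mpath1 P1 measurableT mLE LE_ge0.
have := ge0_integral_pushforward mpath2 P2 measurableT mLE LE_ge0.
rewrite !preimage_setT => <- <-.
rewrite -(ge0_integral_mscale _ measurableT (NngNum rho_ge0) mLE); last first.
  by move=> f _; rewrite lee_fin.
apply: ge0_le_measure_integral => //; apply: le_path_measure.
- move=> A mA; rewrite /pushforward.
  apply: le_lt_trans (probability_le1 _ _) _; last by rewrite ltry.
  by rewrite -[X in measurable X]setTI; exact: mpath1.
- move=> A mA; rewrite /mscale /pushforward /=.
  apply: le_lt_trans (lee_wpmul2l _ (probability_le1 _ _)) _.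
  + by rewrite lee_fin.
  + by rewrite -[X in measurable X]setTI; exact: mpath2.
  + by rewrite mule1 ltry.
move=> m p; have cylinder_prefix d (Omega : measurableType d) (X : nat -> Omega -> F) :
    [set w | forall j, (j <= m)%N -> X j w = p (inord j)] =
    (fun w n => X n w) @^-1` [set f | prefix m f = p].
  by apply/seteqP; split=> w /= /prefixP.
by have := le_cylinder m (fun j => p (inord j)); rewrite !cylinder_prefix.
Qed.

End SamplePathComparison.

Unset Implicit Arguments.

Theorem lemma5p1 (R : realType) (F : finType) (Q : F -> F -> R) (N : nat) :
  stochastic Q -> irreducible Q -> (1 <= N)%N ->
  exists rho : R,
    forall (d1 : measure_display) (Omega1 : measurableType d1)
      (P1 : probability Omega1 R) (mu : F -> R) (Z : nat -> Omega1 -> F),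
    prob_distr mu -> markov_on P1 Z 0 None mu Q ->
    forall k : nat -> nat, k 0%N = 0%N ->
      (forall i, (i.+1 < N)%N -> (k i < k i.+1)%N) ->
    forall (d2 : measure_display) (Omega2 : measurableType d2)
      (P2 : probability Omega2 R) (Zs : nat -> nat -> Omega2 -> F),
    (forall i, (i < N)%N -> exists nu, stationary_distr Q nu /\
        markov_on P2 (Zs i) (k i) (block_end k N i) nu Q) ->
    indep_procs P2 N k Zs ->
    forall L : (nat -> F) -> R, path_measurable L -> (forall f, 0 <= L f) ->
    (\int[P1]_w (L (fun n => Z n w))%:E <=
       rho%:E * \int[P2]_w (L (fun n => glued k N Zs n w))%:E)%E.
Proof.
move=> Q_sto Q_irr N_gt0; have [Q0 _] := Q_sto.
have [delta delta_gt0 delta_le] := stationary_distr_lb Q_sto Q_irr.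
have deltaN_gt0 : 0 < delta ^+ N by exact: exprn_gt0.
exists (delta ^+ N)^-1 => d1 Omega1 P1 mu Z [mu0 mu1] [Z_meas Z_cyl] k k0 k_incr
  d2 Omega2 P2 Zs Zs_markov Zs_indep L mL L_ge0.
apply: le_integral_sample_paths => //.
- by rewrite invr_ge0 ltW.
- by move=> n x; exact: Z_meas.
- move=> n x; have /and3P[blkN _ _] := in_block_blk N_gt0 k0 n.
  have [nu [_ [Zs_meas _]]] := Zs_markov _ blkN.
  by apply: Zs_meas; exact/in_block_window/(in_block_blk N_gt0 k0).
- move=> m z; rewrite [X in (X <= _)%E](Z_cyl m z isT).
  apply: le_trans (lee_wpmul2l _ (glued_cylinder_lb N_gt0 k0 k_incr Q_sto delta_gt0
    delta_le Zs_markov Zs_indep z m)); last by rewrite lee_fin invr_ge0 ltW.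
  rewrite -EFinM lee_fin mulrA mulVf ?gt_eqF // mul1r.
  by rewrite ler_piMl ?prodr_ge0 // le1_of_sum1.
Qed.
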